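(* Let $P\in\mathbb{C}[z_1,\dots,z_d]$. Then for every integer $s\ge1$, \[ \|P^s\|_a\ge\|P\|_a^s . \]
   Context: For multi-indices $\alpha\in\mathbb{N}^d$ write $z^\alpha=z_1^{\alpha_1}\cdots z_d^{\alpha_d}$ and $\alpha!=\alpha_1!\cdots\alpha_d!$. The apolar inner product on $\mathbb{C}[z_1,\dots,z_d]$ is $\langle \sum c_\alpha z^\alpha,\sum d_\alpha z^\alpha\rangle_a=\sum_\alpha\alpha!\,c_\alpha\overline{d_\alpha}$, with norm $\|P\|_a=\sqrt{\langle P,P\rangle_a}$. *)

From HB Require Import structures.
From mathcomp Require Import all_boot all_order all_algebra.
From mathcomp Require Import complex.
From mathcomp Require Import mpoly.
From mathcomp Require Import reals.
Set Implicit Arguments. Unset Strict Implicit. Unset Printing Implicit Defensive.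
Import Order.TTheory GRing.Theory Num.Theory.
Local Open Scope ring_scope.

Definition mfact (d : nat) (m : 'X_{1..d}) : nat := (\prod_(i < d) (m i)`!)%N.

Definition cabs2 (R : realType) (c : R[i]) : R := (@complex.Re R c) ^+ 2 + (@complex.Im R c) ^+ 2.

Definition apolar_sqnorm (R : realType) (d : nat) (P : {mpoly R[i][d]}) : R :=
  \sum_(m <- msupp P) (mfact m)%:R * cabs2 (P@_m).

Definition apolar_norm (R : realType) (d : nat) (P : {mpoly R[i][d]}) : R :=
  Num.sqrt (apolar_sqnorm P).

From HB Require Import structures.
From mathcomp Require Import all_boot all_order all_algebra.
From mathcomp Require Import complex mpoly reals.
From mathcomp Require Import zify ring.
Set Implicit Arguments. Unset Strict Implicit. Unset Printing Implicit Defensive.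
Import Order.TTheory GRing.Theory Num.Theory.
Local Open Scope ring_scope.

(* Write r_k = ||P^k||_a^2.  Since r_0 = 1, it suffices that (r_k) is log-convex,
   r_{k+1}^2 <= r_k r_{k+2}.  For the apolar product, multiplication by p has
   adjoint p^*(D), so for v = p u Cauchy-Schwarz gives
   ||v||^2 = <u, p^*(D) v> <= ||u|| ||p^*(D) v||, and Reznick's identity
   ||p v||^2 = \sum_al ||(∂^al p)^*(D) v||^2 / al! bounds its al = 0 term
   ||p^*(D) v|| by ||p v||; take p = P and u = P^k.
   Coefficients are handled as functions on a box {0..N-1}^d large enough for all
   the supports involved: then every kernel in Reznick's identity is a product of
   one-variable kernels, which Vandermonde's identity evaluates. *)

Section OneVariable.
Variables (C : numFieldType) (N : nat).

Lemma sum_ord_delta (F : nat -> C) x : (x < N)%N ->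
  \sum_(t < N) (x == t)%N%:R * F t = F x.
Proof.
move=> xN; rewrite (bigD1 (Ordinal xN)) //= eqxx mul1r big1 ?addr0 // => t.
by rewrite -val_eqE eq_sym => /negbTE ->; rewrite mul0r.
Qed.

Lemma natr_fact_neq0 n : n`!%:R != 0 :> C.
Proof. by rewrite pnatr_eq0 -lt0n fact_gt0. Qed.

Lemma natr_fact_bin n k : (k <= n)%N ->
  n`!%:R = 'C(n, k)%:R * k`!%:R * (n - k)`!%:R :> C.
Proof. by move=> kn; rewrite -!natrM -mulnA bin_fact. Qed.

Definition Dweight1 (al e A E : nat) : C :=
  \sum_(a < N) (a + al == A)%N%:R * (a + e == E)%N%:R *
    (A`!%:R / a`!%:R) * (E`!%:R / e`!%:R).

Lemma Dweight1E al e A E : (A < N)%N ->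
  Dweight1 al e A E = (al <= A)%N%:R * (A - al + e == E)%N%:R *
    (A`!%:R / (A - al)`!%:R) * (E`!%:R / e`!%:R).
Proof.
move=> AN; rewrite /Dweight1; have [alA|Aal] := leqP al A; last first.
  rewrite mul0r !mul0r big1 // => a _.
  have /negbTE -> : (a + al != A)%N by lia.
  by rewrite !mul0r.
rewrite mul1r -(sum_ord_delta (fun a => (a + e == E)%N%:R * (A`!%:R / a`!%:R) *
  (E`!%:R / e`!%:R)) (leq_ltn_trans (leq_subr al A) AN)).
apply: eq_bigr => a _; rewrite -!mulrA; congr (_ * _).
by congr (_%:R); apply/eqP/eqP; lia.
Qed.

Definition normK1 (c1 e1 c2 e2 : nat) : C :=
  \sum_(z < N) z`!%:R * ((c1 + e1 == z)%N%:R * (c2 + e2 == z)%N%:R).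

Lemma normK1E c1 e1 c2 e2 : (c1 + e1 < N)%N ->
  normK1 c1 e1 c2 e2 = (c1 + e1 == c2 + e2)%N%:R * (c1 + e1)`!%:R.
Proof.
move=> h; rewrite /normK1 mulrC eq_sym
  -(sum_ord_delta (fun z => z`!%:R * (c2 + e2 == z)%N%:R) h).
by apply: eq_bigr => z _; rewrite mulrCA.
Qed.

Definition sosK1 (A E A' E' : nat) : C :=
  \sum_(al < N) \sum_(e < N)
    (al`!%:R)^-1 * e`!%:R * (Dweight1 al e A E * Dweight1 al e A' E').

Lemma sosK1_term c1 e1 c2 e2 al : (c1 < N)%N -> (c2 < N)%N -> (e1 < N)%N ->
  \sum_(e < N) (al`!%:R)^-1 * e`!%:R * (Dweight1 al e c2 e1 * Dweight1 al e c1 e2) =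
  (c1 + e1 == c2 + e2)%N%:R * (c2`!%:R * e2`!%:R) *
  ((al <= c2)%N%:R * ('C(c1, al) * 'C(e1, c2 - al))%:R) :> C.
Proof.
move=> c1N c2N e1N; under eq_bigr => e _ do rewrite !Dweight1E //.
have [alc2|c2al] := leqP al c2; last first.
  by rewrite mul0r mulr0 big1 // => e _; rewrite !mul0r mulr0.
have [e1al|ale1] := leqP (c2 - al) e1; last first.
  rewrite (bin_small ale1) muln0 mulr0 mulr0 big1 // => e _.
  have /negbTE -> : (c2 - al + e != e1)%N by lia.
  by rewrite mulr0n !(mul0r, mulr0).
rewrite mulr1n; pose e0 := (e1 - (c2 - al))%N.
pose F e : C := (al`!%:R)^-1 * e`!%:R *
  ((c2`!%:R / (c2 - al)`!%:R) * (e1`!%:R / e`!%:R) *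
   ((al <= c1)%N%:R * (c1 - al + e == e2)%N%:R * (c1`!%:R / (c1 - al)`!%:R) *
    (e2`!%:R / e`!%:R))).
rewrite (eq_bigr (fun e : 'I_N => (e0 == e)%N%:R * F e)); last first.
  move=> e _; have -> : (c2 - al + e == e1)%N = (e0 == e)%N by apply/eqP/eqP; lia.
  by rewrite /F; ring.
rewrite sum_ord_delta /F; last by rewrite /e0; lia.
have [alc1|c1al] := leqP al c1; last by rewrite (bin_small c1al) mulr0n !(mul0r, mulr0).
have -> : (c1 - al + e0 == e2)%N = (c1 + e1 == c2 + e2)%N by apply/eqP/eqP; lia.
case: (c1 + e1 == c2 + e2)%N; last by rewrite mulr0n !(mul0r, mulr0).
rewrite (natr_fact_bin alc1) (natr_fact_bin e1al) !natrM !mulr1n -/e0.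
by field; rewrite !natr_fact_neq0.
Qed.

Lemma sosK1_normK1 c1 e1 c2 e2 : (c1 + e1 < N)%N -> (c2 + e2 < N)%N ->
  sosK1 c2 e1 c1 e2 = normK1 c1 e1 c2 e2.
Proof.
move=> h1 h2; rewrite normK1E // /sosK1.
have [c1N c2N e1N] : [/\ (c1 < N)%N, (c2 < N)%N & (e1 < N)%N] by split; lia.
under eq_bigr => al _ do rewrite sosK1_term //.
rewrite -mulr_sumr (eq_bigr (fun al : 'I_N =>
  if (al < c2.+1)%N then ('C(c1, al) * 'C(e1, c2 - al))%:R else 0 : C)); last first.
  by move=> al _; rewrite ltnS; case: (al <= c2)%N; rewrite ?mul1r ?mul0r.
rewrite -big_mkcond -(big_ord_widen N (fun al => ('C(c1, al) * 'C(e1, c2 - al))%:R : C));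
  last by lia.
rewrite -natr_sum binomial.Vandermonde.
case: eqP => [eq12|_]; last by rewrite !mul0r.
rewrite eq12 mulr1n !mul1r -!natrM; congr (_%:R).
by rewrite mulnC -[in e2`!](addKn c2 e2) bin_fact ?leq_addr.
Qed.

End OneVariable.

Lemma prod_nat_bool (R : pzSemiRingType) (T : finType) (b : T -> bool) :
  \prod_i (b i)%:R = [forall i, b i]%:R :> R.
Proof.
rewrite -natr_prod; congr (_%:R); have [h|] := boolP [forall i, b i].
  by rewrite big1 // => i _; rewrite (forallP h).
rewrite negb_forall => /existsP [i /negbTE bi].
by rewrite (bigD1 i) //= bi mul0n.
Qed.

Section Box.
Variables (C : numClosedFieldType) (d n : nat).
Local Notation N := n.+1.
Local Notation I := {ffun 'I_d -> 'I_N}.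

Definition indD (x y z : I) : C := \prod_i (x i + y i == z i)%N%:R.
Definition factI (x : I) : C := \prod_i (x i)`!%:R.
Definition mulI (p u : I -> C) (z : I) : C := \sum_x \sum_y indD x y z * (p x * u y).
Definition dotI (u v : I -> C) : C := \sum_x factI x * (u x * (v x)^*).

Definition Dweight (al e A E : I) : C :=
  \sum_a indD a al A * indD a e E * (factI A / factI a) * (factI E / factI e).

(* The coefficients of (∂^al p)^*(D) u, where q^*(D) is the differential
   operator obtained from q by conjugating its coefficients. *)
Definition Dstar (al : I) (p u : I -> C) (e : I) : C :=
  \sum_A \sum_E Dweight al e A E * ((p A)^* * u E).

Definition mul_fits_box (p u : I -> C) :=
  forall x y, p x != 0 -> u y != 0 -> forall i, (x i + y i < N)%N.

Lemma conj_indD x y z : (indD x y z)^* = indD x y z.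
Proof. by rewrite rmorph_prod; apply: eq_bigr => i _; rewrite rmorph_nat. Qed.

Lemma conj_factI x : (factI x)^* = factI x.
Proof. by rewrite rmorph_prod; apply: eq_bigr => i _; rewrite rmorph_nat. Qed.

Lemma factI_neq0 x : factI x != 0.
Proof. by rewrite prodf_seq_neq0; apply/allP => i _; rewrite natr_fact_neq0. Qed.

Lemma factI_ge0 x : 0 <= factI x.
Proof. by apply: prodr_ge0 => i _; apply: ler0n. Qed.

Lemma conj_Dweight al e A E : (Dweight al e A E)^* = Dweight al e A E.
Proof.
rewrite rmorph_sum; apply: eq_bigr => a _.
by rewrite !rmorphM !fmorphV /= !conj_indD !conj_factI.
Qed.

Lemma Dweight_prod al e A E :
  Dweight al e A E = \prod_i Dweight1 C N (al i) (e i) (A i) (E i).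
Proof.
rewrite bigA_distr_bigA; apply: eq_bigr => a _.
by rewrite /indD /factI !big_split /= -!prodfV.
Qed.

Definition normK (c1 e1 c2 e2 : I) : C := \sum_z factI z * (indD c1 e1 z * indD c2 e2 z).

Definition sosK (A E A' E' : I) : C :=
  \sum_al \sum_e (factI al)^-1 * factI e * (Dweight al e A E * Dweight al e A' E').

Lemma sosK_normK (c1 e1 c2 e2 : I) :
  (forall i, c1 i + e1 i < N)%N -> (forall i, c2 i + e2 i < N)%N ->
  sosK c2 e1 c1 e2 = normK c1 e1 c2 e2.
Proof.
move=> h1 h2; have -> : normK c1 e1 c2 e2 = \prod_i normK1 C N (c1 i) (e1 i) (c2 i) (e2 i).
  by rewrite bigA_distr_bigA; apply: eq_bigr => z _; rewrite /indD /factI !big_split.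
transitivity (\prod_i sosK1 C N (c2 i) (e1 i) (c1 i) (e2 i)); last first.
  by apply: eq_bigr => i _; apply: sosK1_normK1.
rewrite /sosK1 bigA_distr_bigA; apply: eq_bigr => al _.
rewrite bigA_distr_bigA; apply: eq_bigr => e _.
by rewrite !Dweight_prod /factI !big_split /= -!prodfV.
Qed.

Lemma sum2_mul (F G : I -> I -> C) :
  (\sum_x \sum_y F x y) * (\sum_x \sum_y G x y) =
  \sum_(q : (I * I) * (I * I)) F q.1.1 q.1.2 * G q.2.1 q.2.2.
Proof.
rewrite !pair_bigA /= mulr_suml.
rewrite -(pair_bigA _ (fun a b : I * I => F a.1 a.2 * G b.1 b.2)) /=.
by apply: eq_bigr => x _; rewrite mulr_sumr.
Qed.

Lemma dot_mulI_kernel p u : dotI (mulI p u) (mulI p u) =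
  \sum_(q : (I * I) * (I * I))
    (p q.1.1 * u q.1.2 * ((p q.2.1)^* * (u q.2.2)^*)) * normK q.1.1 q.1.2 q.2.1 q.2.2.
Proof.
have conj_mulI z :
    (mulI p u z)^* = \sum_x \sum_y indD x y z * ((p x)^* * (u y)^*).
  rewrite rmorph_sum; apply: eq_bigr => x _; rewrite rmorph_sum.
  by apply: eq_bigr => y _; rewrite !rmorphM /= conj_indD.
transitivity (\sum_z \sum_(q : (I * I) * (I * I)) factI z *
    ((indD q.1.1 q.1.2 z * (p q.1.1 * u q.1.2)) *
     (indD q.2.1 q.2.2 z * ((p q.2.1)^* * (u q.2.2)^*)))).
  by apply: eq_bigr => z _; rewrite conj_mulI sum2_mul mulr_sumr.
rewrite exchange_big; apply: eq_bigr => q _; rewrite /normK mulr_sumr.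
by apply: eq_bigr => z _; ring.
Qed.

Lemma sum_dot_Dstar_kernel p u :
  \sum_al (factI al)^-1 * dotI (Dstar al p u) (Dstar al p u) =
  \sum_(q : (I * I) * (I * I))
    ((p q.1.1)^* * u q.1.2 * (p q.2.1 * (u q.2.2)^*)) * sosK q.1.1 q.1.2 q.2.1 q.2.2.
Proof.
have conj_Dstar al e :
    (Dstar al p u e)^* = \sum_A \sum_E Dweight al e A E * (p A * (u E)^*).
  rewrite rmorph_sum; apply: eq_bigr => A _; rewrite rmorph_sum.
  by apply: eq_bigr => E _; rewrite !rmorphM /= conj_Dweight conjCK.
transitivity (\sum_al \sum_(q : (I * I) * (I * I)) \sum_e (factI al)^-1 * (factI e *
    ((Dweight al e q.1.1 q.1.2 * ((p q.1.1)^* * u q.1.2)) *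
     (Dweight al e q.2.1 q.2.2 * (p q.2.1 * (u q.2.2)^*))))).
  apply: eq_bigr => al _; rewrite exchange_big mulr_sumr; apply: eq_bigr => e _.
  by rewrite conj_Dstar sum2_mul !mulr_sumr.
rewrite exchange_big; apply: eq_bigr => q _; rewrite /sosK mulr_sumr.
apply: eq_bigr => al _; rewrite mulr_sumr; apply: eq_bigr => e _.
by ring.
Qed.

(* Reznick's identity.  After exchanging the two indices of p, the kernels agree
   on every term whose coefficient is nonzero. *)
Theorem dot_mulI_sos p u : mul_fits_box p u ->
  dotI (mulI p u) (mulI p u) =
  \sum_al (factI al)^-1 * dotI (Dstar al p u) (Dstar al p u).
Proof.
pose swap (q : (I * I) * (I * I)) := ((q.2.1, q.1.2), (q.1.1, q.2.2)).
have swapK : involutive swap by case=> [[]] ? ? [].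
move=> fit_pu; rewrite dot_mulI_kernel sum_dot_Dstar_kernel (reindex_inj (inv_inj swapK)).
apply: eq_bigr => [[[c1 e1] [c2 e2]]] _ /=.
have [->|p1] := eqVneq (p c1) 0; first by rewrite conjC0; ring.
have [->|u1] := eqVneq (u e1) 0; first by ring.
have [->|p2] := eqVneq (p c2) 0; first by ring.
have [->|u2] := eqVneq (u e2) 0; first by rewrite conjC0; ring.
by rewrite (sosK_normK (fit_pu _ _ p2 u1) (fit_pu _ _ p1 u2)); ring.
Qed.

Definition zeroI : I := [ffun => ord0].

Lemma factI0 : factI zeroI = 1.
Proof. by apply: big1 => i _; rewrite ffunE. Qed.

Lemma indDE x y z : indD x y z = [forall i, x i + y i == z i]%N%:R.
Proof. exact: prod_nat_bool. Qed.

Lemma indD0 x z : indD x zeroI z = (x == z)%:R.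
Proof.
rewrite indDE; congr ((nat_of_bool _)%:R).
apply/forallP/eqP => [h|-> i]; last by rewrite ffunE addn0.
by apply/ffunP => i; apply/val_inj/eqP; have := h i; rewrite ffunE addn0.
Qed.

Lemma Dweight0 e A E : Dweight zeroI e A E = indD A e E * (factI E / factI e).
Proof.
rewrite /Dweight (bigD1 A) //= big1 ?addr0 => [|a /negbTE aA]; last first.
  by rewrite indD0 aA !mul0r.
by rewrite indD0 eqxx mul1r divff ?factI_neq0 // mulr1.
Qed.

Lemma dot_mulI_adj p u v : dotI (mulI p u) v = dotI u (Dstar zeroI p v).
Proof.
pose F x y z := indD x y z * factI z * (p x * u y * (v z)^*).
transitivity (\sum_z \sum_x \sum_y F x y z).
  apply: eq_bigr => z _; rewrite mulr_suml mulr_sumr; apply: eq_bigr => x _.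
  by rewrite mulr_suml mulr_sumr; apply: eq_bigr => y _; rewrite /F; ring.
rewrite exchange_big (eq_bigr (fun x => \sum_y \sum_z F x y z)); last first.
  by move=> x _; rewrite exchange_big.
rewrite exchange_big; apply: eq_bigr => y _.
rewrite rmorph_sum !mulr_sumr; apply: eq_bigr => x _.
rewrite rmorph_sum !mulr_sumr; apply: eq_bigr => z _.
rewrite /F Dweight0 !rmorphM fmorphV /= conj_indD !conj_factI conjCK.
by field; apply: factI_neq0.
Qed.

Lemma dotI_ge0 u : 0 <= dotI u u.
Proof. by apply: sumr_ge0 => x _; rewrite mulr_ge0 ?factI_ge0 ?mul_conjC_ge0. Qed.

Lemma conj_dotI u v : (dotI u v)^* = dotI v u.
Proof.
rewrite rmorph_sum; apply: eq_bigr => x _.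
by rewrite !rmorphM /= conj_factI conjCK [_ * v x]mulrC.
Qed.

Lemma dotI_comb (a b : C) u t : a^* = a -> b^* = b ->
  dotI (fun x => b * u x - a * t x) (fun x => b * u x - a * t x) =
  b * b * dotI u u - a * b * (dotI u t + dotI t u) + a * a * dotI t t.
Proof.
move=> ra rb; rewrite /dotI mulrDr opprD !mulr_sumr -!sumrN -!big_split /=.
by apply: eq_bigr => x _; rewrite rmorphB !rmorphM /= ra rb; ring.
Qed.

Lemma dot_Dstar0_le p u : mul_fits_box p u ->
  dotI (Dstar zeroI p u) (Dstar zeroI p u) <= dotI (mulI p u) (mulI p u).
Proof.
move=> fit_pu; rewrite dot_mulI_sos // (bigD1 zeroI) //= factI0 invr1 mul1r lerDl.
by apply: sumr_ge0 => al _; rewrite mulr_ge0 ?invr_ge0 ?factI_ge0 ?dotI_ge0.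
Qed.

Lemma eq_dotI u u' v v' : u =1 u' -> v =1 v' -> dotI u v = dotI u' v'.
Proof. by move=> eu ev; apply: eq_bigr => x _; rewrite eu ev. Qed.

Theorem dot_mulI_logconvex p u v w :
  v =1 mulI p u -> w =1 mulI p v -> 0 < dotI u u -> mul_fits_box p v ->
  dotI v v ^+ 2 <= dotI u u * dotI w w.
Proof.
set a := dotI u u; set b := dotI v v => vE wE a_gt0 fit_pv.
pose t := Dstar zeroI p v.
have ut : dotI u t = b by rewrite -dot_mulI_adj; apply: eq_dotI => x; rewrite vE.
have tu : dotI t u = b by rewrite -conj_dotI ut geC0_conj ?dotI_ge0.
have := dotI_ge0 (fun x => b * u x - a * t x).
rewrite dotI_comb ?geC0_conj ?dotI_ge0 // -/a ut tu.
have -> : b * b * a - a * b * (b + b) + a * a * dotI t t = a * (a * dotI t t - b ^+ 2).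
  by ring.
rewrite pmulr_rge0 // subr_ge0 => /le_trans; apply.
by rewrite ler_pM2l // (eq_dotI wE wE); apply: dot_Dstar0_le.
Qed.

End Box.

Lemma mnm_le_mdeg d (m : 'X_{1..d}) i : (m i <= mdeg m)%N.
Proof. by rewrite mdegE (bigD1 i) //= leq_addr. Qed.

Lemma msupp_lt_msize (R : nzRingType) d (Q : {mpoly R[d]}) m i :
  m \in msupp Q -> (m i < msize Q)%N.
Proof. by move=> mQ; apply: leq_ltn_trans (mnm_le_mdeg m i) (msize_mdeg_lt mQ). Qed.

Section MpolyBox.
Variables (C : numClosedFieldType) (d n : nat).
Local Notation N := n.+1.
Local Notation I := {ffun 'I_d -> 'I_N}.

Definition mnm_of (x : I) : 'X_{1..d} := [multinom (x i : nat) | i < d].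

Lemma mnm_ofE x i : mnm_of x i = x i.
Proof. exact: mnmE. Qed.

Lemma mnm_of_inj : injective mnm_of.
Proof. by move=> x y xy; apply/ffunP => i; apply: val_inj; rewrite /= -!mnm_ofE xy. Qed.

Definition coefI (Q : {mpoly C[d]}) (x : I) : C := Q@_(mnm_of x).

Definition in_box (Q : {mpoly C[d]}) := forall m i, m \in msupp Q -> (m i < N)%N.

Lemma sum_msupp_box (Q : {mpoly C[d]}) (F : 'X_{1..d} -> C) : in_box Q ->
  (forall m, Q@_m = 0 -> F m = 0) ->
  \sum_(m <- msupp Q) F m = \sum_(x : I) F (mnm_of x).
Proof.
move=> boxQ F0; rewrite -(big_map mnm_of xpredT F).
rewrite [RHS](bigID (mem (msupp Q))) /= [X in _ + X]big1 ?addr0; last first.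
  by move=> m /memN_msupp_eq0 /F0.
rewrite -[RHS]big_filter; apply: perm_big; apply: uniq_perm.
- exact: msupp_uniq.
- by rewrite filter_uniq // map_inj_uniq ?index_enum_uniq //; apply: mnm_of_inj.
move=> m; rewrite mem_filter /=; apply/idP/andP => [mQ|[]//]; split=> //.
have -> : m = mnm_of [ffun i => Ordinal (boxQ m i mQ)].
  by apply/mnmP => i; rewrite mnm_ofE ffunE.
by apply: map_f; rewrite mem_index_enum.
Qed.

Lemma indD_mnm_of (x y z : I) : indD C x y z = ((mnm_of x + mnm_of y)%MM == mnm_of z)%:R.
Proof.
rewrite indDE; congr ((nat_of_bool _)%:R); apply/forallP/eqP => [h|h i].
  by apply/mnmP => i; rewrite mnmDE !mnm_ofE; apply/eqP.
by rewrite -!mnm_ofE -mnmDE h.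
Qed.

Lemma coefI_mul (Q1 Q2 : {mpoly C[d]}) : in_box Q1 -> in_box Q2 ->
  coefI (Q1 * Q2) =1 mulI (coefI Q1) (coefI Q2).
Proof.
move=> box1 box2 z; rewrite /coefI mpolyME raddf_sum big_allpairs /=.
rewrite (sum_msupp_box (F := fun a => \sum_(b <- msupp Q2)
  ((Q1@_a * Q2@_b) *: 'X_[a + b])@_(mnm_of z))) //; last first.
  by move=> m Q1m; apply: big1 => b _; rewrite mcoeffZ Q1m !mul0r.
apply: eq_bigr => x _.
rewrite (sum_msupp_box (F := fun b => ((Q1@_(mnm_of x) * Q2@_b) *:
  'X_[mnm_of x + b])@_(mnm_of z))) //; last first.
  by move=> m Q2m; rewrite mcoeffZ Q2m mulr0 mul0r.
by apply: eq_bigr => y _; rewrite mcoeffZ mcoeffX indD_mnm_of mulrC.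
Qed.

End MpolyBox.

Section Apolar.
Variables (R : realType) (d : nat).
Local Notation C := R[i].

Lemma cabs2E (c : C) : (cabs2 c)%:C%C = c * c^*.
Proof.
rewrite (_ : c^* = conjc c) //; case: c => a b; apply/eqP.
by rewrite eq_complex /cabs2 /=; apply/andP; split; apply/eqP; ring.
Qed.

Lemma cabs2_ge0 (c : C) : 0 <= cabs2 c.
Proof. by rewrite addr_ge0 ?sqr_ge0. Qed.

Lemma cabs2_gt0 (c : C) : c != 0 -> 0 < cabs2 c.
Proof.
rewrite lt_def cabs2_ge0 andbT; apply: contra.
by case: c => a b; rewrite /cabs2 /= paddr_eq0 ?sqr_ge0 // !sqrf_eq0 => /andP[/eqP-> /eqP->].
Qed.

Lemma apolar_sqnorm_ge0 (Q : {mpoly C[d]}) : 0 <= apolar_sqnorm Q.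
Proof. by apply: sumr_ge0 => m _; rewrite mulr_ge0 ?ler0n ?cabs2_ge0. Qed.

Lemma apolar_sqnorm_gt0 (Q : {mpoly C[d]}) : Q != 0 -> 0 < apolar_sqnorm Q.
Proof.
move=> Q0; rewrite /apolar_sqnorm (bigD1_seq (mlead Q)) ?msupp_uniq ?mlead_supp //=.
rewrite ltr_pwDl ?sumr_ge0 // => [|m _]; last by rewrite mulr_ge0 ?ler0n ?cabs2_ge0.
rewrite mulr_gt0 ?ltr0n ?prodn_gt0 ?cabs2_gt0 // => [i|]; first exact: fact_gt0.
by rewrite -mcoeff_msupp mlead_supp.
Qed.

Lemma apolar_sqnorm0 : apolar_sqnorm (0 : {mpoly C[d]}) = 0.
Proof. by rewrite /apolar_sqnorm msupp0 big_nil. Qed.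

Lemma apolar_sqnorm1 : apolar_sqnorm (1 : {mpoly C[d]}) = 1.
Proof.
rewrite /apolar_sqnorm -mpolyC1 msupp1 big_seq1 mpolyC1 mcoeff1 eqxx /mfact big1.
  by rewrite mul1r /cabs2 /= expr0n addr0 expr1n.
by move=> i _; rewrite mnm0E.
Qed.

Lemma apolar_sqnorm_dotI n (Q : {mpoly C[d]}) : in_box n Q ->
  (apolar_sqnorm Q)%:C%C = dotI (coefI (n := n) Q) (coefI Q).
Proof.
move=> boxQ; rewrite /apolar_sqnorm rmorph_sum /=.
under eq_bigr do rewrite rmorphM rmorph_nat /= cabs2E.
rewrite (sum_msupp_box (n := n) (F := fun m => (mfact m)%:R * (Q@_m * (Q@_m)^*))) //; last first.
  by move=> m ->; rewrite mul0r mulr0.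
apply: eq_bigr => x _; congr (_ * _).
by rewrite /mfact /factI natr_prod; apply: eq_bigr => i _; rewrite mnm_ofE.
Qed.

Lemma apolar_sqnorm_logconvex (P : {mpoly C[d]}) k :
  apolar_sqnorm (P ^+ k.+1) ^+ 2 <= apolar_sqnorm (P ^+ k) * apolar_sqnorm (P ^+ k.+2).
Proof.
have [->|P0] := eqVneq P 0.
  by rewrite [0 ^+ k.+1]exprS mul0r apolar_sqnorm0 expr2 mul0r mulr_ge0 ?apolar_sqnorm_ge0.
pose S := (msize P + msize (P ^+ k) + msize (P ^+ k.+1) + msize (P ^+ k.+2))%N.
pose n := (S + S)%N.
have box (Q : {mpoly C[d]}) : (msize Q <= S)%N -> in_box n Q.
  move=> QS m i mQ; apply: leq_trans (msupp_lt_msize i mQ) (leq_trans QS _).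
  by rewrite /n; lia.
have [boxP boxPk boxPk1 boxPk2] : [/\ in_box n P, in_box n (P ^+ k),
    in_box n (P ^+ k.+1) & in_box n (P ^+ k.+2)] by split; apply: box; rewrite /S; lia.
rewrite -lecR rmorphXn rmorphM /= !(apolar_sqnorm_dotI boxPk, apolar_sqnorm_dotI boxPk1,
  apolar_sqnorm_dotI boxPk2).
apply: (dot_mulI_logconvex (p := coefI P)).
- by move=> z; rewrite exprS coefI_mul.
- by move=> z; rewrite exprS coefI_mul.
- by rewrite -apolar_sqnorm_dotI // ltcR apolar_sqnorm_gt0 // expf_neq0.
move=> x y Px Py i.
have /(msupp_lt_msize i) : mnm_of x \in msupp P by rewrite mcoeff_msupp.
have /(msupp_lt_msize i) : mnm_of y \in msupp (P ^+ k.+1) by rewrite mcoeff_msupp.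
by rewrite !mnm_ofE /n /S; lia.
Qed.

End Apolar.

Lemma logconvex_pow_le (R : numDomainType) (r : nat -> R) :
  r 0%N = 1 -> (forall k, 0 < r k) -> (forall k, r k.+1 ^+ 2 <= r k * r k.+2) ->
  forall k, r 1%N ^+ k <= r k.
Proof.
move=> r0 r_gt0 r_lc.
have ratio k : r 1%N * r k <= r k.+1.
  elim: k => [|k IH]; first by rewrite r0 mulr1.
  rewrite -(ler_pM2l (r_gt0 k)) (le_trans _ (r_lc k)) //.
  by rewrite mulrA [r k * _]mulrC expr2 ler_pM2r.
elim=> [|k IH]; first by rewrite expr0 r0.
by rewrite exprS (le_trans _ (ratio k)) // ler_pM2l.
Qed.

Theorem theorem5p1 (R : realType) (d : nat) (P : {mpoly R[i][d]}) (s : nat) :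
  (1 <= s)%N -> apolar_norm P ^+ s <= apolar_norm (P ^+ s).
Proof.
move=> s_gt0; have [->|P0] := eqVneq P 0.
  by case: s s_gt0 => // s _; rewrite /apolar_norm !exprS !mul0r apolar_sqnorm0 sqrtr0 mul0r.
have := logconvex_pow_le (apolar_sqnorm1 R d) _ (apolar_sqnorm_logconvex P) s.
rewrite expr1 => /(_ (fun k => apolar_sqnorm_gt0 (expf_neq0 k P0))) le_pow.
rewrite /apolar_norm -(ler_pXn2r (_ : 0 < 2)%N) ?nnegrE ?exprn_ge0 ?sqrtr_ge0 //.
by rewrite -exprM mulnC exprM !sqr_sqrtr ?apolar_sqnorm_ge0.
Qed.
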